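(* Let $k\ge 3$ and let $S_k$ be the $k\times(2^k-1)$ binary matrix whose columns are all the nonzero vectors of $\mathbb{F}_2^k$. Let $C$ be a binary linear $[n,k,d]$ code with generator matrix $G$, let $m\ge 0$ be an integer, and let $C'$ be the binary code generated by the $k\times(m(2^k-1)+n)$ matrix $$G'=[\underbrace{S_k\,|\,S_k\,|\,\cdots\,|\,S_k}_{m}\,|\,G].$$ Then $C$ is a self-orthogonal $[n,k,d]$ code which is optimal with respect to the Griesmer bound if and only if $C'$ is a self-orthogonal $[N,k,D]$ code with $N=m(2^k-1)+n$ and $D=2^{k-1}m+d$ which is optimal with respect to the Griesmer bound. In particular, $C$ is a self-orthogonal Griesmer code if and only if $C'$ is a self-orthogonal Griesmer code.
   Context: All codes are binary linear codes. A code $C$ is self-orthogonal if $C\subseteq C^\perp$ with respect to the standard inner product $\sum x_iy_i$ over $\mathbb{F}_2$. For positive integers $k,d$ let $g(k,d)=\sum_{i=0}^{k-1}\lceil d/2^i\rceil$ (the Griesmer bound says every binary $[n,k,d]$ code has $n\ge g(k,d)$). A binary $[n,k,d]$ code is a Griesmer code if $n=g(k,d)$, and it is optimal with respect to the Griesmer bound if $g(k,d)\le n<g(k,d+1)$. *)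

(* Binary linear codes as row spaces of matrices over 'F_2. *)
From HB Require Import structures.
From mathcomp Require Import all_boot all_order all_algebra.
Set Implicit Arguments. Unset Strict Implicit. Unset Printing Implicit Defensive.
Import GRing.Theory.
Local Open Scope ring_scope.

Definition wt (n : nat) (c : 'rV['F_2]_n) : nat := #|[set j | c 0 j != 0]|.

Definition in_code (k n : nat) (G : 'M['F_2]_(k, n)) (c : 'rV['F_2]_n) : bool :=
  (c <= G)%MS.

Definition min_dist (k n : nat) (G : 'M['F_2]_(k, n)) (d : nat) : Prop :=
  (exists c, [/\ in_code G c, c != 0 & wt c = d]) /\
  (forall c, in_code G c -> c != 0 -> (d <= wt c)%N).

Definition is_code (k n : nat) (G : 'M['F_2]_(k, n)) (d : nat) : Prop :=
  \rank G = k /\ min_dist G d.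

Definition dotp (n : nat) (x y : 'rV['F_2]_n) : 'F_2 := \sum_(i < n) x 0 i * y 0 i.

Definition self_orth (k n : nat) (G : 'M['F_2]_(k, n)) : Prop :=
  forall x y, in_code G x -> in_code G y -> dotp x y = 0.

Definition ceil_div (a b : nat) : nat := ((a + b - 1) %/ b)%N.
Definition griesmer (k d : nat) : nat := (\sum_(i < k) ceil_div d (2 ^ i))%N.

Definition griesmer_optimal (n k d : nat) : Prop :=
  (griesmer k d <= n < griesmer k d.+1)%N.

(* S_k repeated m times: a k x m(2^k-1) matrix; within each block, column j
   is the binary expansion of j+1 (bit i in row i), so each block lists all
   nonzero vectors of F_2^k exactly once. *)
Definition Srep (k m : nat) : 'M['F_2]_(k, m * (2 ^ k - 1)) :=
  \matrix_(i < k, j < m * (2 ^ k - 1))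
     ((odd (((j %% (2 ^ k - 1)).+1) %/ 2 ^ i))%:R : 'F_2).

From HB Require Import structures.
From mathcomp Require Import all_boot all_order all_algebra zify.
Set Implicit Arguments. Unset Strict Implicit. Unset Printing Implicit Defensive.
Import GRing.Theory.
Local Open Scope ring_scope.

(* The columns of [Srep k m] run m times through the simplex code: the
   codeword of a message u has entries <u, v>, v ranging over the nonzero
   vectors of F_2^k.  For u <> 0 exactly half of all v satisfy <u, v> = 1, so
   every nonzero codeword has weight 2^(k-1) m.  For k >= 3 any u, w admit a
   nonzero e orthogonal to both; then v |-> v + e pairs up the terms of
   sum_v <u, v><w, v>, which therefore vanishes: the repeated simplex code is
   self-orthogonal.  Appending it to G thus adds 2^(k-1) m to every nonzero
   weight and does not change inner products, while the Griesmer function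
   shifts exactly: g(k, 2^(k-1) m + d) = m (2^k - 1) + g(k, d). *)

Lemma F2_neq0 (x : 'F_2) : x != 0 -> x = 1.
Proof. by case: x => -[|[|]] // ? _; apply/val_inj. Qed.

Lemma F2_addxx (x : 'F_2) : x + x = 0.
Proof. exact/addrr_pchar2/pchar_Fp. Qed.

Lemma F2_addr1_neq0 (x : 'F_2) : (x + 1 != 0) = (x == 0).
Proof. by case: (eqVneq x 0) => [->|/F2_neq0 ->]; rewrite ?add0r ?F2_addxx. Qed.

Lemma exists_coord1 n (u : 'rV['F_2]_n) : u != 0 -> exists i, u 0 i = 1.
Proof.
move=> u_neq0; have /existsP[i ui_neq0] : [exists i, u 0 i != 0].
  apply: contraNT u_neq0 => /existsPn u0; apply/eqP/rowP => i.
  by rewrite mxE; apply/eqP/negPn.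
by exists i; apply: F2_neq0.
Qed.

Lemma dotpE n (u v : 'rV['F_2]_n) : dotp u v = (u *m v^T) 0 0.
Proof. by rewrite mxE; apply: eq_bigr => i _; rewrite mxE. Qed.

Lemma dotpC n (u v : 'rV['F_2]_n) : dotp u v = dotp v u.
Proof. by apply: eq_bigr => i _; rewrite mulrC. Qed.

Lemma dotpDr n (u v w : 'rV['F_2]_n) : dotp u (v + w) = dotp u v + dotp u w.
Proof. by rewrite !dotpE linearD mulmxDr mxE. Qed.

Lemma dotp_row_mx n1 n2 (a c : 'rV['F_2]_n1) (b d : 'rV['F_2]_n2) :
  dotp (row_mx a b) (row_mx c d) = dotp a c + dotp b d.
Proof. by rewrite !dotpE tr_row_mx mul_row_col mxE. Qed.

Lemma dotp_delta n (u : 'rV['F_2]_n) i : dotp u (delta_mx 0 i) = u 0 i.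
Proof. by rewrite dotpE trmx_delta -colE mxE. Qed.

Lemma card_dotp_neq0 k (u : 'rV['F_2]_k) :
  u != 0 -> #|[set v | dotp u v != 0]| = (2 ^ (k - 1))%N.
Proof.
move=> /exists_coord1[i ui1]; set A := [set v | dotp u v != 0].
have shiftA : (+%R^~ (delta_mx 0 i)) @^-1: A = ~: A.
  by apply/setP => v; rewrite !inE dotpDr dotp_delta ui1 F2_addr1_neq0 negbK.
have := cardsC A; rewrite -shiftA card_preimset; last exact: addIr.
rewrite card_mx card_Fp // mul1n; move: #|A| => a.
by case: k {u A shiftA ui1} i => [[] //|k] _; rewrite subSS subn0 expnS; lia.
Qed.

Lemma sum_shift_invariant_F2 k (h : 'rV['F_2]_k -> 'F_2) (e : 'rV['F_2]_k) :
  e != 0 -> (forall v, h (v + e) = h v) -> \sum_v h v = 0.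
Proof.
move=> /exists_coord1[i ei1] h_shift.
(* Split each term along the coordinate i, which v |-> v + e flips. *)
transitivity (\sum_v (h v * v 0 i + h (v + e) * (v + e) 0 i)).
  apply: eq_bigr => v _; rewrite h_shift -mulrDr mxE ei1 addrA F2_addxx.
  by rewrite add0r mulr1.
rewrite big_split /=.
by rewrite -(reindex_inj (P := xpredT) (F := fun v => h v * v 0 i) (addIr e)) F2_addxx.
Qed.

Lemma exists_orthogonal_nonzero k (u w : 'rV['F_2]_k) : (2 < k)%N ->
  exists2 e, e != 0 & dotp u e = 0 /\ dotp w e = 0.
Proof.
move=> k_gt2; set A := row_mx u^T w^T.
have : kermx A != 0.
  rewrite kermx_eq0 /row_free; apply: contraTN k_gt2 => /eqP <-.
  by rewrite -leqNgt rank_leq_col.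
case/rowV0Pn => e /sub_kermxP; rewrite mul_mx_row -row_mx0 => /eq_row_mx[ue we] e_neq0.
by exists e; rewrite // dotpC dotpE [dotp w e]dotpC dotpE ue we mxE.
Qed.

Lemma sum_dotpM_eq0 k (u w : 'rV['F_2]_k) : (2 < k)%N ->
  \sum_v dotp u v * dotp w v = 0.
Proof.
case/(exists_orthogonal_nonzero u w) => e e_neq0 [ue we].
by apply: (sum_shift_invariant_F2 e_neq0) => v; rewrite !dotpDr ue we !addr0.
Qed.

Definition bitrow k (x : nat) : 'rV['F_2]_k :=
  \row_(i < k) ((odd (x %/ 2 ^ i))%:R : 'F_2).

Lemma bits_inj k x y : (x < 2 ^ k)%N -> (y < 2 ^ k)%N ->
  (forall i, (i < k)%N -> odd (x %/ 2 ^ i) = odd (y %/ 2 ^ i)) -> x = y.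
Proof.
elim: k x y => [|k IH] x y; first by rewrite expn0; case: x; case: y.
move=> x_lt y_lt bits_eq.
have half_lt z : (z < 2 ^ k.+1)%N -> (z./2 < 2 ^ k)%N.
  by rewrite -divn2 ltn_divLR // -expnSr.
rewrite -[x]odd_double_half -[y]odd_double_half.
have := bits_eq 0%N isT; rewrite !expn0 !divn1 => ->.
rewrite (IH x./2 y./2) ?half_lt // => i i_lt.
by have := bits_eq i.+1 i_lt; rewrite expnS !divnMA !divn2.
Qed.

Lemma bitrow_bij k : bijective (fun x : 'I_(2 ^ k) => bitrow k x).
Proof.
apply: inj_card_bij; last by rewrite card_mx card_Fp // card_ord mul1n.
move=> x y /rowP xy; apply/val_inj/(bits_inj (ltn_ord x) (ltn_ord y)) => i i_lt.
by have := xy (Ordinal i_lt); rewrite !mxE; case: odd; case: odd.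
Qed.

Lemma bitrow0 k : bitrow k 0 = 0.
Proof. by apply/rowP => i; rewrite !mxE div0n. Qed.

Lemma sum_bitrow_nonzero (R : nmodType) k (F : 'rV['F_2]_k -> R) :
  F 0 = 0 -> \sum_(r < 2 ^ k - 1) F (bitrow k r.+1) = \sum_v F v.
Proof.
move=> F0; rewrite (reindex _ (onW_bij _ (bitrow_bij k))) /=.
have [N ->] : exists N, (2 ^ k = N.+1)%N by exists (2 ^ k).-1; rewrite prednK ?expn_gt0.
by rewrite subn1 big_ord_recl /= bitrow0 F0 add0r.
Qed.

Lemma sum_ord_mul_modn (R : nmodType) m N (F : nat -> R) :
  \sum_(j < m * N) F (j %% N)%N = (\sum_(r < N) F r) *+ m.
Proof.
rewrite -(big_mkord xpredT (fun j => F (j %% N)%N)) big_nat_mul.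
rewrite (eq_bigr (fun _ => \sum_(r < N) F r)) ?sumr_const_nat ?subn0 // => i _.
rewrite mulSn -{1}[(i * N)%N]add0n big_addn addnK big_mkord.
by apply: eq_bigr => r _; rewrite addnC modnMDl modn_small.
Qed.

Lemma Srep_mulmxE k m (u : 'rV['F_2]_k) j :
  (u *m Srep k m) 0 j = dotp u (bitrow k (j %% (2 ^ k - 1)).+1).
Proof. by rewrite !mxE; apply: eq_bigr => i _; rewrite !mxE. Qed.

Lemma sum_Srep_cols (R : nmodType) k m (F : 'rV['F_2]_k -> R) : F 0 = 0 ->
  \sum_(j < m * (2 ^ k - 1)) F (bitrow k (j %% (2 ^ k - 1)).+1) = (\sum_v F v) *+ m.
Proof.
by move=> F0; rewrite (sum_ord_mul_modn _ _ (fun r => F (bitrow k r.+1))) sum_bitrow_nonzero.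
Qed.

Lemma card_set_sum (T : finType) (P : pred T) : #|[set x | P x]| = (\sum_x P x)%N.
Proof. by rewrite -sum1dep_card big_mkcond. Qed.

Lemma wt_row_mx n1 n2 (a : 'rV['F_2]_n1) (b : 'rV['F_2]_n2) :
  wt (row_mx a b) = (wt a + wt b)%N.
Proof.
rewrite /wt !card_set_sum big_split_ord /=.
by congr (_ + _)%N; apply: eq_bigr => j _; rewrite ?row_mxEl ?row_mxEr.
Qed.

Definition const_weight k n (A : 'M['F_2]_(k, n)) (w : nat) : Prop :=
  forall u, u != 0 -> wt (u *m A) = w.

Lemma const_weight_Srep k m : const_weight (Srep k m) (2 ^ (k - 1) * m).
Proof.
move=> u u_neq0; rewrite /wt card_set_sum.
under eq_bigr do rewrite Srep_mulmxE.
rewrite (@sum_Srep_cols nat _ _ (fun v => dotp u v != 0)); last first.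
  by rewrite dotpC dotpE mul0mx mxE eqxx.
by rewrite -card_set_sum card_dotp_neq0 // -mulr_natr natn.
Qed.

Lemma self_orthP k n (A : 'M['F_2]_(k, n)) :
  self_orth A <-> forall u w, dotp (u *m A) (w *m A) = 0.
Proof.
split=> [soA u w | dotA _ _ /submxP[u ->] /submxP[w ->] //].
by apply: soA; apply: submxMl.
Qed.

Lemma self_orth_Srep k m : (2 < k)%N -> self_orth (Srep k m).
Proof.
move=> k_gt2; apply/self_orthP => u w; rewrite /dotp.
under eq_bigr do rewrite !Srep_mulmxE.
rewrite (@sum_Srep_cols _ _ m (fun v => dotp u v * dotp w v)) ?sum_dotpM_eq0 ?mul0rn //.
by rewrite dotpC dotpE mul0mx mxE mul0r.
Qed.

Lemma self_orth_row_mx k n1 n2 (A : 'M['F_2]_(k, n1)) (B : 'M['F_2]_(k, n2)) :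
  self_orth A -> self_orth (row_mx A B) <-> self_orth B.
Proof.
move=> /self_orthP soA; rewrite !self_orthP.
have dotAB u w : dotp (u *m row_mx A B) (w *m row_mx A B) = dotp (u *m B) (w *m B).
  by rewrite !mul_mx_row dotp_row_mx soA add0r.
by split=> so u w; [rewrite -dotAB | rewrite dotAB].
Qed.

Lemma row_free_row_mxr k n1 n2 (A : 'M['F_2]_(k, n1)) (B : 'M['F_2]_(k, n2)) :
  row_free B -> row_free (row_mx A B).
Proof.
case/row_freeP => X BX; apply/row_freeP; exists (col_mx 0 X).
by rewrite mul_row_col mulmx0 add0r.
Qed.

Lemma is_code_row_mx k n1 n2 (A : 'M['F_2]_(k, n1)) (B : 'M['F_2]_(k, n2)) w d :
  const_weight A w -> is_code B d -> is_code (row_mx A B) (w + d).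
Proof.
move=> wA [rankB [[_ [/submxP[u ->] uB_neq0 wt_uB]] minB]].
have freeB : row_free B by rewrite /row_free rankB.
have freeAB := row_free_row_mxr A freeB.
have nz_msg n (C : 'M['F_2]_(k, n)) (v : 'rV_k) : v *m C != 0 -> v != 0.
  by apply: contraNneq => ->; rewrite mul0mx.
have wtAB v : v != 0 -> wt (v *m row_mx A B) = (w + wt (v *m B))%N.
  by move=> v_neq0; rewrite mul_mx_row wt_row_mx wA.
split; first exact/eqP.
split.
  have u_neq0 := nz_msg _ _ _ uB_neq0.
  exists (u *m row_mx A B); split; first exact: submxMl.
    by rewrite mulmx_free_eq0.
  by rewrite wtAB ?wt_uB.
move=> _ /submxP[v ->] /nz_msg v_neq0.
rewrite wtAB // leq_add2l minB ?mulmx_free_eq0 //.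
exact: submxMl.
Qed.

Lemma ceil_divMDl q d b : (0 < b)%N -> ceil_div (q * b + d) b = (q + ceil_div d b)%N.
Proof. by move=> b_gt0; rewrite /ceil_div -!addnA -addnBA ?divnMDl ?ltn_addl. Qed.

Lemma sum_expn2 k : (\sum_(i < k) 2 ^ i)%N = (2 ^ k - 1)%N.
Proof.
elim: k => [|k IH]; first by rewrite big_ord0.
by rewrite big_ord_recr /= IH expnS; have := expn_gt0 2 k; lia.
Qed.

Lemma griesmer_shift k m d :
  griesmer k (2 ^ (k - 1) * m + d) = (m * (2 ^ k - 1) + griesmer k d)%N.
Proof.
rewrite /griesmer (eq_bigr (fun i : 'I_k => 2 ^ (k - 1 - i) * m + ceil_div d (2 ^ i)))%N.
  rewrite big_split /= -big_distrl /= mulnC (reindex_inj rev_ord_inj) /=.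
  rewrite -sum_expn2; congr (m * _ + _)%N; apply: eq_bigr => i _.
  by congr (2 ^ _)%N; have := ltn_ord i; lia.
move=> i _; rewrite -ceil_divMDl ?expn_gt0 // mulnAC -expnD subnK //.
by have := ltn_ord i; lia.
Qed.

Local Close Scope ring_scope.

Theorem theorem3p4 (k n d m : nat) (G : 'M['F_2]_(k, n)) :
  (3 <= k)%N -> is_code G d ->
  ((self_orth G /\ griesmer_optimal n k d) <->
   (self_orth (row_mx (Srep k m) G) /\
    is_code (row_mx (Srep k m) G) (2 ^ (k - 1) * m + d) /\
    griesmer_optimal (m * (2 ^ k - 1) + n) k (2 ^ (k - 1) * m + d)))
  /\
  ((self_orth G /\ n = griesmer k d) <->
   (self_orth (row_mx (Srep k m) G) /\
    is_code (row_mx (Srep k m) G) (2 ^ (k - 1) * m + d) /\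
    m * (2 ^ k - 1) + n = griesmer k (2 ^ (k - 1) * m + d))).
Proof.
move=> k_ge3 codeG.
have codeG' := is_code_row_mx (@const_weight_Srep k m) codeG.
have soG' := self_orth_row_mx G (@self_orth_Srep k m k_ge3).
have shift_eq : m * (2 ^ k - 1) + n = m * (2 ^ k - 1) + griesmer k d <-> n = griesmer k d.
  by split=> [/addnI | ->].
rewrite /griesmer_optimal -(addnS (2 ^ (k - 1) * m) d) !griesmer_shift.
rewrite leq_add2l ltn_add2l.
by move: codeG' soG' shift_eq; tauto.
Qed.
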